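(* Let $A\subseteq\Delta^{m-1}\times\Delta^{n-1}$, let $\mathscr T$ be a triangulation of $A$, and let $\mathscr T'$ be the result of a flip on $\mathscr T$ supported on a circuit $X=(X^+,X^-)$. Suppose $\sigma\in\mathscr T$, $\sigma\notin\mathscr T'$, and $G(\sigma)$ is connected. Then $\sigma$ contains an inclusion-maximal element of $\mathscr T_X^+$.
   Context: General conventions. For a finite point set $A\subset\mathbb R^d$: a cell is a subset of $A$; a simplex is an affinely independent cell; a face of a cell $C$ is a subset $F\subseteq C$ which is the set of minimizers on $C$ of some linear functional. A triangulation of $A$ is a collection $\mathscr T$ of simplices of $A$, closed under taking faces, such that for all $\sigma,\sigma'\in\mathscr T$, $\mathrm{conv}(\sigma)\cap\mathrm{conv}(\sigma')=\mathrm{conv}(F)$ for a common face $F$ of $\sigma$ and $\sigma'$, and such that $\bigcup_{\sigma\in\mathscr T}\mathrm{conv}(\sigma)=\mathrm{conv}(A)$. A circuit is a minimal affinely dependent subset $X$; it satisfies an affine dependence $\sum_{x\in X}\lambda_x x=0$, $\sum\lambda_x=0$, all $\lambda_x\neq0$, unique up to scaling, which partitions $X=X^+\cup X^-$ into the points with positive and with negative coefficients; writing $X=(X^+,X^-)$ fixes a choice of sign. Set $\mathscr T_X^+:=\{\sigma\subseteq X:X^+\not\subseteq\sigma\}$ and $\mathscr T_X^-:=\{\sigma\subseteq X:X^-\not\subseteq\sigma\}$. For $C\in\mathscr T$, $\mathrm{link}_{\mathscr T}(C):=\{C'\in\mathscr T: C\cap C'=\emptyset,\ C\cup C'\in\mathscr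 T\}$. A triangulation $\mathscr T$ of $A$ has a flip supported on the circuit $(X^+,X^-)$, $X\subseteq A$, if $\mathscr T_X^+\subseteq\mathscr T$ and all inclusion-maximal elements of $\mathscr T_X^+$ have the same link $\mathscr L$ in $\mathscr T$; the result of the flip is the triangulation $(\mathscr T\setminus\{\rho\cup\sigma:\rho\in\mathscr L,\sigma\in\mathscr T_X^+\})\cup\{\rho\cup\sigma:\rho\in\mathscr L,\sigma\in\mathscr T_X^-\}$. $\Delta^{m-1}\times\Delta^{n-1}:=\{(e_i,f_j):i\in[m],j\in[n]\}\subset\mathbb R^m\times\mathbb R^n$, with $e_i$, $f_j$ the standard basis vectors. Let $K$ be the complete bipartite graph on vertex set $\{e_1,\dots,e_m\}\cup\{f_1,\dots,f_n\}$ with edges $e_if_j$. For $C\subseteq\Delta^{m-1}\times\Delta^{n-1}$, $G(C)$ is the minimal subgraph of $K$ with edge set $\{e_if_j:(e_i,f_j)\in C\}$ (its vertices are the endpoints of these edges). *)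

From HB Require Import structures.
From mathcomp Require Import all_boot all_order all_algebra.
Set Implicit Arguments. Unset Strict Implicit. Unset Printing Implicit Defensive.
Import Order.TTheory GRing.Theory Num.Theory.
Local Open Scope ring_scope.

Section Defs.
Variables (R : realFieldType) (m n : nat).

(* the point (e_i, f_j) is encoded by the pair (i, j) *)
Definition point := ('I_m * 'I_n)%type.
Definition coordT := ('I_m + 'I_n)%type.

Definition coord (p : point) (k : coordT) : R :=
  match k with inl i => (p.1 == i)%:R | inr j => (p.2 == j)%:R end.

Definition aff_dep (C : {set point}) : Prop :=
  exists lam : point -> R,
    (forall p, p \notin C -> lam p = 0) /\
    (exists2 p, p \in C & lam p != 0) /\
    \sum_(p in C) lam p = 0 /\
    (forall k, \sum_(p in C) lam p * coord p k = 0).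

Definition simplex (C : {set point}) : Prop := ~ aff_dep C.

Definition eval_fun (w : coordT -> R) (p : point) : R :=
  \sum_(k : coordT) w k * coord p k.

(* F is a face of C: the minimizers on C of some linear functional,
   with the usual convention that the empty set is also a face. *)
Definition face (F C : {set point}) : Prop :=
  F \subset C /\
  (F = set0 \/
   exists w : coordT -> R,
     forall p, p \in C -> (p \in F <-> forall q, q \in C -> eval_fun w p <= eval_fun w q)).

Definition in_conv (C : {set point}) (x : coordT -> R) : Prop :=
  exists lam : point -> R,
    (forall p, 0 <= lam p) /\
    (forall p, p \notin C -> lam p = 0) /\
    \sum_(p in C) lam p = 1 /\
    (forall k, x k = \sum_(p in C) lam p * coord p k).

Definition triangulation (A : {set point}) (T : {set {set point}}) : Prop :=
  (forall s, s \in T -> s \subset A /\ simplex s) /\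
  (forall s F, s \in T -> face F s -> F \in T) /\
  (forall s s', s \in T -> s' \in T ->
     exists F, face F s /\ face F s' /\
       (forall x, (in_conv s x /\ in_conv s' x) <-> in_conv F x)) /\
  (forall x, (exists2 s, s \in T & in_conv s x) <-> in_conv A x).

Definition circuit (X : {set point}) : Prop :=
  aff_dep X /\ (forall Y : {set point}, Y \proper X -> ~ aff_dep Y).

Definition signed_circuit (Xp Xm : {set point}) : Prop :=
  circuit (Xp :|: Xm) /\
  exists lam : point -> R,
    (forall p, p \in Xp -> 0 < lam p) /\
    (forall p, p \in Xm -> lam p < 0) /\
    (forall p, p \notin Xp :|: Xm -> lam p = 0) /\
    \sum_(p in Xp :|: Xm) lam p = 0 /\
    (forall k, \sum_(p in Xp :|: Xm) lam p * coord p k = 0).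

Definition TXplus (Xp Xm : {set point}) : {set {set point}} :=
  [set s : {set point} | (s \subset Xp :|: Xm) && ~~ (Xp \subset s)].
Definition TXminus (Xp Xm : {set point}) : {set {set point}} :=
  [set s : {set point} | (s \subset Xp :|: Xm) && ~~ (Xm \subset s)].

Definition link (T : {set {set point}}) (C : {set point}) : {set {set point}} :=
  [set C' in T | [disjoint C & C'] && (C :|: C' \in T)].

Definition flip_result (T L : {set {set point}}) (Xp Xm : {set point}) :=
  (T :\: [set r :|: s | r in L, s in TXplus Xp Xm])
  :|: [set r :|: s | r in L, s in TXminus Xp Xm].

Definition is_flip (A : {set point}) (T T' : {set {set point}}) (Xp Xm : {set point}) : Prop :=
  signed_circuit Xp Xm /\ Xp :|: Xm \subset A /\
  TXplus Xp Xm \subset T /\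
  exists L, (forall s, maxset (fun S => S \in TXplus Xp Xm) s -> link T s = L) /\
            T' = flip_result T L Xp Xm.

Definition Gadj (C : {set point}) : rel coordT :=
  fun u v => match u, v with
             | inl i, inr j => (i, j) \in C
             | inr j, inl i => (i, j) \in C
             | _, _ => false end.

Definition Gvert (C : {set point}) (u : coordT) : bool := [exists v, Gadj C u v].

Definition G_connected (C : {set point}) : Prop :=
  forall u v, Gvert C u -> Gvert C v -> connect (Gadj C) u v.

End Defs.

(* Write s = r :|: sig with r in the common link of the flip and sig in T_X^+.
   As s is removed by the flip, sig contains X^- but misses some x in X^+, so
   sig lies in the maximal cell t = X \ {x}, and t :|: r is a simplex of T.
   For y in t /\ X^+, the circuit dependence forces points of X^- (hence of s)
   sharing each coordinate of y, so both endpoints of y are vertices of G(s).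
   A path between them in G(s) writes y as an alternating sum of points of s;
   unless y is in s this is an affine dependence inside the simplex t :|: r. *)

From Pilot Require Import Defs.
From HB Require Import structures.
From mathcomp Require Import all_boot all_order all_algebra.
Set Implicit Arguments. Unset Strict Implicit. Unset Printing Implicit Defensive.
Import Order.TTheory GRing.Theory Num.Theory.
Local Open Scope ring_scope.

Lemma sum_indicator_mul (R : pzSemiRingType) (I : finType) (F : I -> R) (i : I) :
  \sum_j (j == i)%:R * F j = F i.
Proof.
rewrite (bigD1 i) //= eqxx mul1r big1 ?addr0 // => j /negbTE ->.
by rewrite mul0r.
Qed.

Lemma sumr_eq0_neg (R : realDomainType) (I : finType) (X : {pred I}) (F : I -> R) j :
  \sum_(i in X) F i = 0 -> j \in X -> 0 < F j -> exists2 i, i \in X & F i < 0.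
Proof.
move=> sum0 jX Fj_gt0; apply/exists_inP; apply: contraTT isT => /exists_inPn Fge0.
have F_ge0 i : i \in X -> 0 <= F i by move/Fge0; rewrite -leNgt.
by move: Fj_gt0; rewrite (psumr_eq0P F_ge0 sum0 jX) ltxx.
Qed.

Section EdgeDependences.
Variables (R : realFieldType) (m n : nat).
Local Notation point := (point m n).
Local Notation coordT := (coordT m n).
Local Notation coord := (Defs.coord R).

Lemma Gvert_coord (C : {set point}) (p : point) (k : coordT) :
  p \in C -> coord p k = 1 -> Gvert C k.
Proof.
move=> pC; case: k => [i|j] /= /eqP; rewrite pnatr_eq1 eqb1 => /eqP <-; apply/existsP.
- by exists (inr p.2); rewrite /= -surjective_pairing.
- by exists (inl p.1); rewrite /= -surjective_pairing.
Qed.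

(* Homogenized coordinates: [None] carries the affine weight, so an affine
   dependence is a linear dependence of the vectors [hcoord p]. *)
Definition hcoord (p : point) (k : option coordT) : R :=
  if k is Some k then coord p k else 1.

Definition vtx (u : coordT) (k : option coordT) : R :=
  match u, k with
  | inl _, Some k => (u == k)%:R
  | inr _, Some k => - (u == k)%:R
  | inl _, None => 1
  | inr _, None => 0
  end.

Lemma hcoord_vtx (p : point) k : hcoord p k = vtx (inl p.1) k - vtx (inr p.2) k.
Proof.
by case: k => [[i|j]|] /=; rewrite ?oppr0 ?addr0 ?sub0r ?opprK.
Qed.

Lemma edge_hcoord (C : {set point}) u w :
  Gadj C u w ->
  exists2 p, p \in C & exists c : R, forall k, c * hcoord p k = vtx u k - vtx w k.
Proof.
case: u w => [i|j] [i'|j'] //= uw.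
- by exists (i, j') => //; exists 1 => k; rewrite mul1r hcoord_vtx.
- by exists (i', j) => //; exists (-1) => k; rewrite mulN1r hcoord_vtx opprB.
Qed.

Lemma connect_hcoord_comb (C : {set point}) u v :
  connect (Gadj C) u v ->
  exists lam : point -> R, (forall p, p \notin C -> lam p = 0) /\
    forall k, \sum_p lam p * hcoord p k = vtx u k - vtx v k.
Proof.
case/connectP => ws; elim: ws u => [|w ws IH] u /= => [_ ->|/andP [uw wws] v_last].
  by exists (fun=> 0); split=> // k; rewrite big1 ?subrr // => p; rewrite mul0r.
have [lam [lamC lam_comb]] := IH w wws v_last.
have [e eC [c ec]] := edge_hcoord uw.
exists (fun p => (p == e)%:R * c + lam p); split.
  move=> p pC; rewrite lamC // (_ : p == e = false) ?mul0r ?add0r //.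
  by apply: contraNF pC => /eqP ->.
move=> k; under eq_bigr => p _ do rewrite mulrDl -mulrA.
by rewrite big_split /= sum_indicator_mul ec lam_comb addrA subrK.
Qed.

Lemma hcoord_comb_aff_dep (C : {set point}) (lam : point -> R) :
  (forall p, p \notin C -> lam p = 0) -> (exists p, lam p != 0) ->
  (forall k, \sum_p lam p * hcoord p k = 0) -> aff_dep R C.
Proof.
move=> lamC [p lamp] comb0.
have restrict F : \sum_(q in C) lam q * F q = \sum_q lam q * F q.
  rewrite big_mkcond; apply: eq_bigr => q _.
  by case: ifPn => // /lamC ->; rewrite mul0r.
exists lam; split=> //; split.
  by exists p => //; apply: contraTT lamp => /lamC ->; rewrite negbK.
split.
  rewrite -[RHS](comb0 None) -(restrict (hcoord^~ None)).
  by apply: eq_bigr => q _; rewrite mulr1.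
by move=> k; rewrite (restrict (fun q => coord q k)); exact: comb0 (Some k).
Qed.

Lemma simplex_connect_mem (D s : {set point}) (y : point) :
  simplex R D -> s \subset D -> y \in D ->
  connect (Gadj s) (inl y.1) (inr y.2) -> y \in s.
Proof.
move=> simD sD yD /connect_hcoord_comb [lam [lams lam_comb]].
apply: contraT => ys; exfalso; apply: simD.
apply: (@hcoord_comb_aff_dep _ (fun p => lam p - (p == y)%:R)).
- move=> p pD; rewrite lams; last by apply: contra pD; apply: (subsetP sD).
  by rewrite (_ : p == y = false) ?subrr //; apply: contraNF pD => /eqP ->.
- by exists y; rewrite lams // eqxx sub0r oppr_eq0 oner_eq0.
- move=> k; under eq_bigr => p _ do rewrite mulrBl.
  by rewrite sumrB lam_comb sum_indicator_mul hcoord_vtx subrr.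
Qed.

Lemma signed_circuit_coord (Xp Xm : {set point}) (y : point) k :
  signed_circuit R Xp Xm -> y \in Xp -> coord y k = 1 ->
  exists2 p, p \in Xm & coord p k = 1.
Proof.
case=> _ [lam [lamP [_ [_ [_ lam_comb]]]]] yXp yk.
have coord01 p : coord p k = 0 \/ coord p k = 1.
  by case: k {yk lam_comb} => [i|j] /=; case: eqP; [right|left|right|left].
have yX : y \in Xp :|: Xm by rewrite inE yXp.
have y_pos : 0 < lam y * coord y k by rewrite yk mulr1 lamP.
have [p pX p_neg] := sumr_eq0_neg (lam_comb k) yX y_pos.
have pk : coord p k = 1 by case: (coord01 p) p_neg => ->; rewrite ?mulr0 ?ltxx.
exists p => //; move: pX; rewrite inE => /orP [pXp|//].
by move: p_neg; rewrite pk mulr1 ltNge ltW // lamP.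
Qed.

Lemma signed_circuit_Gvert (Xp Xm S : {set point}) (y : point) k :
  signed_circuit R Xp Xm -> Xm \subset S -> y \in Xp -> coord y k = 1 -> Gvert S k.
Proof.
move=> circ XmS yXp yk; have [p pXm pk] := signed_circuit_coord circ yXp yk.
exact: Gvert_coord (subsetP XmS p pXm) pk.
Qed.

End EdgeDependences.

Section FlipCombinatorics.
Variables (m n : nat).
Local Notation point := (point m n).

Lemma maxset_TXplus (Xp Xm : {set point}) x :
  x \in Xp -> maxset (fun S => S \in TXplus Xp Xm) ((Xp :|: Xm) :\ x).
Proof.
move=> xXp; apply/maxsetP; split.
  rewrite inE subD1set /=; apply/subsetPn; exists x => //; by rewrite !inE eqxx.
move=> B; rewrite inE => /andP [BX XpB] XxB; apply/eqP; rewrite eqEsubset XxB andbT.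
apply/subsetP => p pB; rewrite in_setD1 (subsetP BX) // andbT.
apply: contra XpB => /eqP px; apply/subsetP => q qXp.
have [->|qx] := eqVneq q x; first by rewrite -px.
by apply: (subsetP XxB); rewrite !inE qx qXp.
Qed.

Lemma flip_result_removed (T L : {set {set point}}) (Xp Xm s : {set point}) :
  s \in T -> s \notin flip_result T L Xp Xm ->
  exists r sig, [/\ r \in L, sig \in TXplus Xp Xm, Xm \subset sig & s = r :|: sig].
Proof.
move=> sT s_out.
have : s \in [set r :|: sig | r in L, sig in TXplus Xp Xm].
  by apply: contraNT s_out => s_kept; rewrite in_setU in_setD s_kept sT.
case/imset2P => r sig rL sigP s_eq; rewrite s_eq in s_out *; exists r, sig; split=> //.
move: sigP; rewrite inE => /andP [sigX _]; apply: contraNT s_out => Xm_sig.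
by rewrite in_setU; apply/orP; right; apply/imset2P; exists r sig; rewrite // inE sigX.
Qed.

End FlipCombinatorics.

Theorem proposition6p1 (R : realFieldType) (m n : nat)
    (A : {set point m n}) (T T' : {set {set point m n}})
    (Xp Xm : {set point m n}) (s : {set point m n}) :
  triangulation R A T ->
  is_flip R A T T' Xp Xm ->
  s \in T -> s \notin T' ->
  G_connected s ->
  exists t : {set point m n},
    maxset (fun S => S \in TXplus Xp Xm) t /\ t \subset s.
Proof.
move=> [Tsimplices _] [circ [_ [_ [L [linkL ->]]]]] sT s_out Gs.
have [r [sig [rL sigP Xm_sig s_eq]]] := flip_result_removed sT s_out; subst s.
move: sigP; rewrite inE => /andP [sigX /subsetPn [x xXp xsig]].
set t := (Xp :|: Xm) :\ x.
have tmax := maxset_TXplus Xm xXp; exists t; split => //.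
have sig_t : sig \subset t.
  apply/subsetP => p psig; rewrite in_setD1 (subsetP sigX) // andbT.
  by apply: contraNneq xsig => <-.
have [_ simp_tr] : t :|: r \subset A /\ simplex R (t :|: r).
  by move: rL; rewrite -(linkL t tmax) inE => /and3P [_ _ /Tsimplices].
have Xm_s : Xm \subset r :|: sig by apply: subset_trans Xm_sig (subsetUr _ _).
apply/subsetP => y yt; have /setD1P [_ /setUP [yXp|yXm]] := yt.
  apply: (simplex_connect_mem simp_tr); first by rewrite setUC setSU.
    by rewrite inE yt.
  by apply: Gs; apply: (signed_circuit_Gvert circ Xm_s yXp); rewrite /= eqxx.
by rewrite inE (subsetP Xm_sig) ?orbT.
Qed.
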